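(* Let $\psi$ be a CNF formula whose variables include annotated copies $x^{\tau}$ of existential variables $x$ (where $\tau$ is a partial assignment to universal variables to the left of $x$), and let $C$ be a clause of $\psi$ consisting of annotated existential literals. Let $\sigma$ be a partial assignment to universal variables and let $C' = inst(\sigma, C)$ be the clause obtained by the \textsf{IR-calc} instantiation step. Suppose that $\psi$ contains both definition clauses $(\overline{x^{\tau}} \lor x)$ and $(x^{\tau} \lor \overline{x})$ for every annotated variable $x^{\tau}$ occurring in $C$ or in $C'$ (definition clauses for annotated variables of $C'$ not yet present being added first). Then $C'$ is an asymmetric tautology with respect to $\psi$; in particular $C'$ is a \textsf{QRAT} clause and can be added in a \textsf{QRAT} proof, i.e. the instantiation step can be simulated in \textsf{QRAT}.
   Context: Quantified Boolean formulas (QBFs) are in closed prenex form $Q_1X_1\dots Q_kX_k.\psi$ with $\psi$ a CNF; a variable in $X_i$ has level $i$, and $\ell \le_Q k$ means the level of $\ell$ is at most that of $k$. In expansion-based calculi, an existential variable $x$ may be annotated by a partial assignment $\tau$ to universal variables left of $x$, giving a new variable $x^{\tau}$. The \textsf{IR-calc} instantiation rule: for a partial assignment $\sigma$ to universal variables, $inst(\sigma, C) = \{ x^{\tau[\sigma]} : x^{\tau} \in C\}$ (literals keep their polarity), where for each universal $\ell$ left of $x$, $\tau[\sigma](\ell) = \tau(\ell)$ if $\ell \in dom(\tau)$, else $\sigma(\ell)$ if $\ell \in dom(\sigma)$. The definition clauses of an annotated variable $x^{\tau}$ are $(\overline{x^{\tau}} \lor x)$ and $(x^{\tau} \lor \overline{x})$,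 with $x^{\tau}$ placed in the same quantifier block as $x$. A clause $C$ is an asymmetric tautology (AT) w.r.t. a CNF $\psi$ iff unit propagation on $\psi \cup \{(\overline{l}) : l \in C\}$ derives the empty clause, where unit propagation repeatedly, for a unit clause $(\ell)$, removes all clauses containing $\ell$ and removes $\overline{\ell}$ from all clauses. A clause $C \lor \ell$ is a \textsf{QRAT} clause w.r.t. $Q.\psi$ on $\ell$ if for every $D \lor \overline{\ell} \in \psi$ the outer resolvent $C \cup \{k \in D : k \le_Q \ell\}$ is AT w.r.t. $\psi$; every AT clause is a \textsf{QRAT} clause on any literal, and \textsf{QRAT} permits adding such clauses. *)

From mathcomp Require Import all_boot.
Set Implicit Arguments. Unset Strict Implicit. Unset Printing Implicit Defensive.

(* Universal variables are 'I_nu; existential variables are named by nat.   *)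
(* An annotation is a partial assignment to the universal variables.        *)
Definition annot (nu : nat) := {ffun 'I_nu -> option bool}.

(* A variable is either a universal u (inl u), a plain existential x        *)
(* (inr (x, None)) or an annotated existential x^tau (inr (x, Some tau)).   *)
Definition var (nu : nat) := ('I_nu + (nat * option (annot nu)))%type.

(* A literal: (polarity, variable); polarity true = positive.               *)
Definition lit (nu : nat) := (bool * var nu)%type.
Definition clause (nu : nat) := seq (lit nu).
Definition cnf (nu : nat) := seq (clause nu).

Definition neg_lit nu (l : lit nu) : lit nu := (~~ l.1, l.2).

Definition evar nu (x : nat) : var nu := inr (x, None).
Definition avar nu (x : nat) (tau : annot nu) : var nu := inr (x, Some tau).

(* Quantifier prefix: ulev u = level of universal u, elev x = level of the  *)
(* existential x; an annotated x^tau lives in the same block as x.          *)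
Definition var_level nu (ulev : 'I_nu -> nat) (elev : nat -> nat) (v : var nu)
  : nat :=
  match v with inl u => ulev u | inr (x, _) => elev x end.
Definition lit_level nu ulev elev (l : lit nu) := @var_level nu ulev elev l.2.

Definition annot_wf nu (ulev : 'I_nu -> nat) (elev : nat -> nat) (x : nat)
  (tau : annot nu) : Prop :=
  forall u, tau u != None -> ulev u < elev x.

Definition annotated_lit nu ulev elev (l : lit nu) : Prop :=
  exists x tau, l.2 = @avar nu x tau /\ @annot_wf nu ulev elev x tau.

Definition annot_inst nu (ulev : 'I_nu -> nat) (elev : nat -> nat) (x : nat)
  (sigma tau : annot nu) : annot nu :=
  [ffun u => if ulev u < elev x then
               (if tau u is Some b then Some b else sigma u)
             else None].

Definition inst_var nu ulev elev (sigma : annot nu) (v : var nu) : var nu :=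
  match v with
  | inr (x, Some tau) => @avar nu x (@annot_inst nu ulev elev x sigma tau)
  | _ => v
  end.

Definition inst nu ulev elev (sigma : annot nu) (C : clause nu) : clause nu :=
  [seq (l.1, @inst_var nu ulev elev sigma l.2) | l <- C].

Definition has_def_clauses nu (psi : cnf nu) (x : nat) (tau : annot nu) : Prop :=
  [:: (false, @avar nu x tau); (true, @evar nu x)] \in psi /\
  [:: (true, @avar nu x tau); (false, @evar nu x)] \in psi.

Definition up_step nu (l : lit nu) (F : cnf nu) : cnf nu :=
  [seq [seq k <- c | k != neg_lit l] | c <- F & l \notin c].

Definition is_unit nu (c : clause nu) (l : lit nu) : bool := undup c == [:: l].

Inductive up_refutes nu : cnf nu -> Prop :=
| UPEmpty F : [::] \in F -> up_refutes F
| UPStep F c l : c \in F -> is_unit c l -> up_refutes (up_step l F) ->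
                 up_refutes F.

Definition AT nu (psi : cnf nu) (C : clause nu) : Prop :=
  up_refutes (psi ++ [seq [:: neg_lit l] | l <- C]).

Definition QRAT_on nu ulev elev (psi : cnf nu) (C : clause nu) (l : lit nu)
  : Prop :=
  l \in C /\
  forall D, D \in psi -> neg_lit l \in D ->
    AT psi ([seq k <- C | k != l] ++
            [seq k <- D | (k != neg_lit l) &&
                          (@lit_level nu ulev elev k <= @lit_level nu ulev elev l)]).

Definition QRAT_addable nu ulev elev (psi : cnf nu) (C : clause nu) : Prop :=
  AT psi C \/ exists l, @QRAT_on nu ulev elev psi C l.

From mathcomp Require Import all_boot.

Set Implicit Arguments.
Unset Strict Implicit.
Unset Printing Implicit Defensive.

(* Assume the negation of every literal of C' = inst(sigma, C).  For a literal
   x^tau' of C', the definition clauses of x^tau' propagate the negated plain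
   literal x, and the definition clauses of the corresponding x^tau of C then
   propagate the negation of that literal of C.  After these two rounds every
   literal of C is false, so the clause C of psi is the conflict. *)

Lemma undup_eq1 (T : eqType) (s : seq T) (y : T) :
  y \in s -> {in s, forall k, k = y} -> undup s = [:: y].
Proof.
move=> ys eqy; apply/perm_small_eq/uniq_perm; rewrite ?undup_uniq // => k.
by rewrite mem_undup mem_seq1; apply/idP/eqP => [/eqy | ->].
Qed.

Section UnitPropagation.
Variable nu : nat.
Implicit Types (F : cnf nu) (c : clause nu) (A P : seq (lit nu)) (k l : lit nu).

Lemma neg_litK : involutive (@neg_lit nu).
Proof. by case=> b v; rewrite /neg_lit /= negbK. Qed.

Lemma neg_lit_neq l : neg_lit l != l.
Proof. by case: l => b v; rewrite /neg_lit xpair_eqE eqxx andbT; case: b. Qed.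

(* A partial assignment is the sequence of its true literals. *)
Definition consistent A := {in A, forall k, neg_lit k \notin A}.

Definition falsified A c := {in c, forall k, neg_lit k \in A}.

Definition residual A c := [seq k <- c | neg_lit k \notin A].

(* Invariant relating F0 to the formula F reached by unit propagation along A. *)
Definition represents F0 A F :=
  forall c, c \in F0 -> ~~ has (mem A) c -> residual A c \in F.

Definition forces F A l :=
  exists2 c, c \in F & l \in c /\ {in c, forall k, k != l -> neg_lit k \in A}.

Inductive up_conflict F : seq (lit nu) -> Prop :=
| UPFalsified A c : c \in F -> falsified A c -> up_conflict F A
| UPPropagate A l : l \notin A -> forces F A l -> up_conflict F (l :: A) ->
                    up_conflict F A.

Lemma forces_subset F A A' l :
  {subset A <= A'} -> forces F A l -> forces F A' l.
Proof.
move=> sAA' [c cF [lc others]]; exists c => //.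
by split=> // k kc /(others k kc)/sAA'.
Qed.

Lemma forces_unit F A l : [:: l] \in F -> forces F A l.
Proof.
by exists [:: l] => //; split=> [|k]; rewrite ?mem_seq1 // => /eqP->/eqP.
Qed.

Lemma forces_binary F A c k l :
  c \in F -> c =i [:: k; l] -> neg_lit k \in A -> forces F A l.
Proof.
move=> cF c_kl nkA; exists c => //.
split=> [|k']; rewrite c_kl !inE ?eqxx ?orbT //.
by case/orP=> /eqP-> //; rewrite eqxx.
Qed.

Lemma consistent_cons A l :
  consistent A -> neg_lit l \notin A -> consistent (l :: A).
Proof.
move=> consA nlA k; rewrite !inE => /predU1P[-> | kA].
  by rewrite (negbTE (neg_lit_neq l)).
apply/norP; split; last exact: consA.
by apply: contraNneq nlA => <-; rewrite neg_litK.
Qed.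

Lemma represents_nil F : represents F [::] F.
Proof.
by move=> c cF _; rewrite /residual (eq_filter (a2 := predT)) ?filter_predT.
Qed.

Lemma represents_up_step F0 A F l :
  represents F0 A F -> represents F0 (l :: A) (up_step l F).
Proof.
move=> repr d dF0 /hasPn dNsat.
have dNsatA : ~~ has (mem A) d.
  by apply/hasPn=> k kd; apply: contra (dNsat k kd) => kA; exact: mem_behead.
have lNd : l \notin d by apply/negP => /dNsat/negP; apply; exact: mem_head.
have -> : residual (l :: A) d = [seq k <- residual A d | k != neg_lit l].
  rewrite -filter_predI; apply: eq_filter => k /=.
  by rewrite inE negb_or (can2_eq neg_litK neg_litK) andbC.
apply/mapP; exists (residual A d) => //.
by rewrite mem_filter repr // mem_filter (negbTE lNd) andbF.
Qed.

Lemma falsified_residual_nil F0 A F c :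
  consistent A -> represents F0 A F -> c \in F0 -> falsified A c -> [::] \in F.
Proof.
move=> consA repr cF0 cfalse.
have <- : residual A c = [::].
  rewrite /residual (eq_in_filter (a2 := pred0)) ?filter_pred0 //.
  by move=> k /cfalse->.
apply: repr => //; apply/hasPn=> k kc; apply: contraL (cfalse k kc) => kA.
exact: consA.
Qed.

Lemma forced_residual_unit F0 A F c l :
  consistent A -> represents F0 A F -> l \notin A -> neg_lit l \notin A ->
  c \in F0 -> l \in c -> {in c, forall k, k != l -> neg_lit k \in A} ->
  residual A c \in F /\ is_unit (residual A c) l.
Proof.
move=> consA repr lNA nlNA cF0 lc others; split.
  apply: repr => //; apply/hasPn=> k kc; have [-> // | kl] := eqVneq k l.
  by apply: contraL (others k kc kl); apply: consA.
apply/eqP/undup_eq1; first by rewrite mem_filter nlNA.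
move=> k; rewrite mem_filter => /andP[nkNA kc]; apply/eqP.
by apply: contraNT nkNA => kl; rewrite others.
Qed.

Lemma up_conflict_refutes F0 A F :
  up_conflict F0 A -> consistent A -> represents F0 A F -> up_refutes F.
Proof.
move=> conflict; elim: conflict F => {A}
  [A c cF0 cfalse | A l lNA [c cF0 [lc others]] _ IH] F consA repr.
  exact: UPEmpty (falsified_residual_nil consA repr cF0 cfalse).
have [nlA | nlNA] := boolP (neg_lit l \in A).
  apply: UPEmpty (falsified_residual_nil consA repr cF0 _) => k kc.
  by have [-> // | kl] := eqVneq k l; apply: others.
have [unitF unit_l] := forced_residual_unit consA repr lNA nlNA cF0 lc others.
apply: UPStep unitF unit_l _; apply: IH; first exact: consistent_cons.
exact: represents_up_step.
Qed.

Lemma up_conflict_refutes_nil F : up_conflict F [::] -> up_refutes F.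
Proof.
by move=> conflict; apply: up_conflict_refutes conflict _ (@represents_nil F).
Qed.

Lemma up_conflict_propagate_all F A P :
  {in P, forall l, forces F A l} ->
  (forall A', {subset A <= A'} -> {subset P <= A'} -> up_conflict F A') ->
  up_conflict F A.
Proof.
elim: P A => [|l P IH] A forcedP cont; first by apply: cont.
have forcedP' : {in P, forall k, forces F A k}.
  by move=> k kP; apply: forcedP; rewrite inE kP orbT.
have [lA | lNA] := boolP (l \in A).
  apply: IH forcedP' _ => A' sAA' sPA'; apply: cont => // k.
  by rewrite inE => /predU1P[-> | /sPA']; first exact: sAA'.
apply: UPPropagate lNA (forcedP l (mem_head l P)) _.
apply: IH => [k kP | A' sAA' sPA'].
  by apply: forces_subset (forcedP' k kP) => k' k'A; rewrite inE k'A orbT.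
apply: cont => [k kA | k]; first by apply: sAA'; rewrite inE kA orbT.
by rewrite inE => /predU1P[-> | /sPA']; first by apply: sAA'; rewrite mem_head.
Qed.

End UnitPropagation.

Section DefinitionClauses.
Variables (nu : nat) (psi : cnf nu) (x : nat) (tau : annot nu).
Hypothesis def_x_tau : has_def_clauses psi x tau.

Lemma def_clause_in b : [:: (~~ b, avar x tau); (b, evar nu x)] \in psi.
Proof. by case: b; case: def_x_tau. Qed.

Lemma forces_evar_of_avar A b :
  (b, avar x tau) \in A -> forces psi A (b, evar nu x).
Proof.
move=> tauA; apply: forces_binary (def_clause_in b) _ _ => //.
by rewrite /neg_lit negbK.
Qed.

Lemma forces_avar_of_evar A b :
  (b, evar nu x) \in A -> forces psi A (b, avar x tau).
Proof.
move=> xA; apply: forces_binary (def_clause_in (~~ b)) _ _ => [k|].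
  by rewrite negbK !inE orbC.
by rewrite /neg_lit negbK.
Qed.

End DefinitionClauses.

Definition strip_annot nu (l : lit nu) : lit nu :=
  if l.2 is inr (x, _) then (l.1, evar nu x) else l.

Theorem lemma2 (nu : nat) (ulev : 'I_nu -> nat) (elev : nat -> nat)
  (psi : cnf nu) (C : clause nu) (sigma : annot nu) :
  C \in psi ->
  (forall l, l \in C -> annotated_lit ulev elev l) ->
  (forall l x tau, l \in C ++ inst ulev elev sigma C ->
     l.2 = @avar nu x tau -> has_def_clauses psi x tau) ->
  AT psi (inst ulev elev sigma C) /\
  QRAT_addable ulev elev psi (inst ulev elev sigma C).
Proof.
move=> C_psi annC defs; set C' := inst ulev elev sigma C.
suff AT_C' : AT psi C' by split; last left.
apply: up_conflict_refutes_nil; set F := _ ++ _.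
have psiF : {subset psi <= F} by move=> c; rewrite mem_cat => ->.
have defF l x tau :
    l \in C ++ C' -> l.2 = avar x tau -> has_def_clauses F x tau.
  by move=> lCC' /(defs l x tau lCC')[d1 d2]; split; apply: psiF.
apply: (up_conflict_propagate_all (P := [seq neg_lit l | l <- C'])).
  by move=> _ /mapP[l lC' ->]; apply/forces_unit; rewrite mem_cat map_f ?orbT.
move=> A1 _ C'A1.
apply: (up_conflict_propagate_all
         (P := [seq neg_lit (strip_annot l) | l <- C])).
  move=> _ /mapP[[b v] lC ->]; have [x [tau [/= vE _]]] := annC _ lC; subst v.
  set l' := (b, avar x (annot_inst ulev elev x sigma tau)).
  have l'C' : l' \in C' by apply/mapP; exists (b, avar x tau).
  have def_l' : has_def_clauses F x (annot_inst ulev elev x sigma tau).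
    by apply: (defF l'); rewrite ?mem_cat ?l'C' ?orbT.
  exact: (forces_evar_of_avar def_l' (C'A1 _ (map_f _ l'C'))).
move=> A2 _ CA2.
apply: (up_conflict_propagate_all (P := [seq neg_lit l | l <- C])).
  move=> _ /mapP[[b v] lC ->]; have [x [tau [/= vE _]]] := annC _ lC; subst v.
  have def_l : has_def_clauses F x tau.
    by apply: (defF (b, avar x tau)); rewrite ?mem_cat ?lC.
  exact: (forces_avar_of_evar def_l (CA2 _ (map_f _ lC))).
move=> A3 _ CA3; apply: (UPFalsified (c := C)); first exact: psiF.
by move=> k kC; apply/CA3/map_f.
Qed.
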